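(* Let $S$ be a range set and $\Gamma$ the middle-third Cantor set. The set of all uniformly perfect metrics in $\mathrm{Ult}(\Gamma,S)$ is an $F_\sigma$ subset of $(\mathrm{Ult}(\Gamma,S),\mathcal{UD}_\Gamma^S)$.
   Context: A range set is $S\subseteq[0,\infty)$ with $0\in S$. $\mathrm{Ult}(X,S)$ is the set of all ultrametrics on $X$ with values in $S$ generating the topology of $X$. $\mathcal{UD}_X^S(d,e)$ is the infimum of all $\epsilon\in S\cup\{\infty\}$ such that for all $x,y$, $d(x,y)\le\max\{e(x,y),\epsilon\}$ and $e(x,y)\le\max\{d(x,y),\epsilon\}$. A metric space $(X,d)$ is uniformly perfect if there is $c\in(0,1)$ such that for every $x\in X$ and every $r\in(0,\delta_d(X))$ ($\delta_d$ = diameter) there is $y$ with $cr\le d(x,y)\le r$. $F_\sigma$: countable union of closed sets. *)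

From HB Require Import structures.
From mathcomp Require Import all_boot all_order all_algebra.
From mathcomp Require Import all_classical all_reals all_analysis.
Set Implicit Arguments. Unset Strict Implicit. Unset Printing Implicit Defensive.
Import Order.TTheory GRing.Theory Num.Theory.
Import numFieldNormedType.Exports.
Local Open Scope classical_set_scope.
Local Open Scope ring_scope.

Definition range_set (R : realType) (S : set R) : Prop :=
  (forall s, S s -> 0 <= s) /\ S 0.

Definition cantor_set (R : realType) : set R :=
  [set x | exists a : nat -> bool,
     (fun n : nat => \sum_(0 <= k < n) ((2 * (a k : nat))%:R / 3%:R ^+ k.+1 : R))
       @ \oo --> x].

Definition Gamma (R : realType) := {x : R | cantor_set x}.

Definition euclid_open (R : realType) (U : set (Gamma R)) : Prop :=
  forall x, U x -> exists2 del : R, 0 < del &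
    forall y : Gamma R, `|sval y - sval x| < del -> U y.

Definition metric_open (R : realType) (d : Gamma R -> Gamma R -> R)
  (U : set (Gamma R)) : Prop :=
  forall x, U x -> exists2 eps : R, 0 < eps & forall y, d x y < eps -> U y.

Definition is_ultrametric (X : Type) (R : realType) (d : X -> X -> R) : Prop :=
  (forall x y, d x y = 0 <-> x = y) /\
  (forall x y, d x y = d y x) /\
  (forall x y z, d x z <= Num.max (d x y) (d y z)).

Definition Ult (R : realType) (S : set R) : set (Gamma R -> Gamma R -> R) :=
  [set d | is_ultrametric d /\ (forall x y, S (d x y)) /\
           (forall U, euclid_open U <-> metric_open d U)].

Definition UD (X : Type) (R : realType) (S : set R) (d e : X -> X -> R) : \bar R :=
  ereal_inf [set eps : \bar R |
    (eps = +oo%E \/ exists2 s, S s & eps = s%:E) /\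
    forall x y, ((d x y)%:E <= Order.max (e x y)%:E eps)%E /\
                ((e x y)%:E <= Order.max (d x y)%:E eps)%E].

Definition diam (X : Type) (R : realType) (d : X -> X -> R) : \bar R :=
  ereal_sup [set (d p.1 p.2)%:E | p in [set: X * X]].

Definition uniformly_perfect (X : Type) (R : realType) (d : X -> X -> R) : Prop :=
  exists c : R, 0 < c < 1 /\
    forall (x : X) (r : R), 0 < r -> (r%:E < diam d)%E ->
      exists y, c * r <= d x y <= r.

Definition UD_closed_in (X : Type) (R : realType) (S : set R)
  (A F : set (X -> X -> R)) : Prop :=
  F `<=` A /\
  forall d, A d -> (forall eps : R, 0 < eps ->
      exists2 e, F e & (UD S d e < eps%:E)%E) -> F d.

Definition UD_Fsigma_in (X : Type) (R : realType) (S : set R)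
  (A B : set (X -> X -> R)) : Prop :=
  exists F : nat -> set (X -> X -> R),
    (forall n, UD_closed_in S A (F n)) /\ B = \bigcup_n F n.

From mathcomp Require Import all_boot all_order all_algebra.
From mathcomp Require Import all_classical all_reals all_analysis.
From mathcomp Require Import lra.
Import Order.TTheory GRing.Theory Num.Theory.
Local Open Scope classical_set_scope.
Local Open Scope ring_scope.

(* Call d "c-perfect" when every x has, for each 0 < r < diam d, a point y
   with c r <= d(x,y) <= r.  Uniform perfectness is c-perfectness for some
   c in (0,1), and c-perfectness is inherited by every smaller c > 0, so the
   uniformly perfect metrics are the union over n of the (1/(n+2))-perfect
   ones.  It remains to see that each c-perfect class is UD-closed; this
   holds for an arbitrary set X and ambient family A of distance functions:
   if UD(d,e) < eps then d and e coincide on all pairs where one of them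
   exceeds some s < eps, and taking eps = c r both the hypothesis r < diam
   and the witness y transfer from e to d.  Neither the Cantor set, nor the
   ultrametric and topological conditions of Ult, nor the range-set
   hypothesis on S play any role. *)

Lemma UD_agree {R : realType} {S : set R} {X : Type} {d e : X -> X -> R}
    {eps : R} :
  (UD S d e < eps%:E)%E ->
  exists2 s : R, s < eps &
    forall x y, s < e x y \/ s < d x y -> d x y = e x y.
Proof.
move=> /ereal_inf_lt [z [[->|[s Ss ->]] Hz]] zlt; first by [].
exists s; first by rewrite lte_fin in zlt.
move=> x y Hxy; have [Hde Hed] := Hz x y.
rewrite le_max !lee_fin in Hde; rewrite le_max !lee_fin in Hed.
apply/eqP; rewrite eq_le.
case: Hxy => Hs; case/orP: Hde => Hde; case/orP: Hed => Hed; rewrite ?Hde ?Hed //=.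
all: exfalso; clear Hz zlt; lra.
Qed.

(* If d and e agree above s, then any r > s below diam d is below diam e:
   a pair witnessing r < diam d has d-value > s, hence the same e-value. *)
Lemma diam_agree {R : realType} {X : Type} {d e : X -> X -> R} {s r : R} :
  (forall x y, s < e x y \/ s < d x y -> d x y = e x y) ->
  s < r -> (r%:E < diam d)%E -> (r%:E < diam e)%E.
Proof.
move=> agree sr rd.
have [_ [p _ <-] rp] := ereal_sup_gt rd; rewrite lte_fin in rp.
have dp : d p.1 p.2 = e p.1 p.2 by apply: agree; right; exact: lt_trans rp.
apply: (lt_le_trans (y := (e p.1 p.2)%:E)); first by rewrite lte_fin -dp.
by apply: ereal_sup_ubound; exists p.
Qed.

Definition perfect_with {X : Type} {R : realType} (c : R) (d : X -> X -> R)
    : Prop :=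
  forall (x : X) (r : R), 0 < r -> (r%:E < diam d)%E ->
    exists y, c * r <= d x y <= r.

Lemma perfect_with_closed {X : Type} {R : realType} (S : set R)
    (A : set (X -> X -> R)) (c : R) :
  0 < c <= 1 -> UD_closed_in S A (A `&` perfect_with c).
Proof.
move=> /andP [c0 c1]; split; first by move=> d [].
move=> d Ad approx; split => // x r r0 rd.
have [e [_ perf_e] de] := approx _ (mulr_gt0 c0 r0).
have [s scr agree] := UD_agree de.
have sr : s < r by apply: (lt_le_trans scr); rewrite ler_piMl // ltW.
have [y /andP [lo hi]] := perf_e x r r0 (diam_agree agree sr rd).
exists y; have -> : d x y = e x y by apply: agree; left; exact: lt_le_trans lo.
by rewrite lo hi.
Qed.

Lemma perfect_with_le {X : Type} {R : realType} (c' c : R) (d : X -> X -> R) :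
  c' <= c -> perfect_with c d -> perfect_with c' d.
Proof.
move=> c'c perf x r r0 rd; have [y /andP [lo hi]] := perf x r r0 rd.
by exists y; rewrite hi andbT (le_trans _ lo) // ler_pM2r.
Qed.

Definition inv_nat2 (R : realType) (n : nat) : R := (n.+2%:R)^-1.

Lemma inv_nat2_in01 (R : realType) (n : nat) : 0 < inv_nat2 R n < 1.
Proof. by rewrite /inv_nat2 invr_gt0 ltr0n invf_lt1 ?ltr0n // ltr1n. Qed.

Lemma inv_nat2_le {R : realType} {c : R} :
  0 < c -> exists n, inv_nat2 R n <= c.
Proof.
move=> c0; exists (Num.truncn c^-1); rewrite /inv_nat2 -[c in _ <= c]invrK.
rewrite lef_pV2 ?posrE ?invr_gt0 ?ltr0n //.
by apply: ltW; apply: (lt_trans (truncnS_gt _)); rewrite ltr_nat.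
Qed.

Theorem lemma4p2 (R : realType) (S : set R) :
  range_set S ->
  UD_Fsigma_in S (Ult S) [set d | Ult S d /\ uniformly_perfect d].
Proof.
move=> _; exists (fun n => Ult S `&` perfect_with (inv_nat2 R n)); split.
  move=> n; apply: perfect_with_closed.
  by have /andP [-> /ltW ->] := inv_nat2_in01 R n.
apply/seteqP; split => d /=.
- move=> [Ud [c [/andP [c0 _] perf]]].
  have [n cn] := inv_nat2_le c0.
  by exists n => //; split => //; exact: perfect_with_le perf.
- move=> [n _ [Ud perf]]; split => //.
  by exists (inv_nat2 R n); split => //; exact: inv_nat2_in01.
Qed.
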